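(* Let $p$ be any prime, $G=SL(2,\mathbb{Z}_p)$, $T=\{F\in SL(2,\mathbb{Z}_p):\mathrm{Tr}(F)\neq 2\pmod p\}$ and $\Gamma=\Gamma(G,T)$. Then assigning to each $F=\begin{pmatrix}\alpha&\beta\\ \gamma&\delta\end{pmatrix}$ the color $(\alpha,\beta)$ is a proper vertex coloring of $\Gamma$ with $p^2-1$ colors, so that $p(p-1)\leq\chi(\Gamma)\leq p^2-1$ and $\omega(\Gamma)\leq p^2-1$.
   Context: The Cayley graph $\Gamma(G,T)$ has vertex set $G$ and an edge between $g_1,g_2$ iff $g_1^{-1}g_2\in T$. A proper coloring assigns colors to vertices so that adjacent vertices receive different colors; $\chi(\Gamma)$ is the minimum number of colors in a proper coloring, and $\omega(\Gamma)$ is the largest size of a set of pairwise adjacent vertices. *)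

From HB Require Import structures.
From mathcomp Require Import all_boot all_order all_algebra.
Set Implicit Arguments. Unset Strict Implicit. Unset Printing Implicit Defensive.
Import GRing.Theory.
Local Open Scope ring_scope.

Definition proper_coloring (V : finType) (C : Type) (e : rel V) (c : V -> C) :=
  forall x y, e x y -> c x <> c y.

Definition colorable (V : finType) (e : rel V) (k : nat) : bool :=
  [exists c : {ffun V -> 'I_k}, [forall x, forall y, e x y ==> (c x != c y)]].

Lemma colorable_card (V : finType) (e : rel V) (irr : irreflexive e) :
  exists k, colorable e k.
Proof.
exists #|V|; apply/existsP; exists [ffun x => enum_rank x].
apply/forallP => x; apply/forallP => y; apply/implyP => exy; rewrite !ffunE.
apply/negP => /eqP Heq; have Hxy : x = y by exact: enum_rank_inj.
by move: exy; rewrite Hxy irr.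
Qed.

(* chromatic number: least k such that e is k-colourable (0 if e has a loop,
   which never happens for the graphs considered here) *)
Definition chromatic_number (V : finType) (e : rel V) : nat :=
  match boolP [forall x, ~~ e x x] with
  | AltTrue h =>
      ex_minn (colorable_card (fun x => negbTE (forallP h x)))
  | AltFalse _ => 0%N
  end.

Definition is_clique (V : finType) (e : rel V) (S : {set V}) :=
  [forall x in S, forall y in S, (x != y) ==> e x y].

Definition clique_number (V : finType) (e : rel V) : nat :=
  \max_(S : {set V} | is_clique e S) #|S|.

Definition SL2 (p : nat) := {A : 'M['F_p]_2 | \det A == 1}.

Definition inT (p : nat) (F : 'M['F_p]_2) : bool := \tr F != 2%:R.

Definition cayley_adj (p : nat) : rel (SL2 p) :=
  fun g1 g2 => inT (invmx (val g1) *m val g2).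

Definition top_row (p : nat) (F : SL2 p) : 'F_p * 'F_p :=
  (val F ord0 ord0, val F ord0 (lift ord0 ord0)).

From HB Require Import structures.
From mathcomp Require Import all_boot all_order all_algebra.
From mathcomp Require Import ring.
Set Implicit Arguments.
Unset Strict Implicit.
Unset Printing Implicit Defensive.

Import GRing.Theory.
Local Open Scope ring_scope.

(* For F, G in SL(2, Z_p) one has det (F - G) = 2 - Tr (F^-1 G), so F and G are
   adjacent exactly when F - G is invertible.  Matrices with the same top row
   differ by a singular matrix, so the top-row colouring is proper; its colours
   are the p^2 - 1 nonzero rows, which bounds both chi and omega.  Conversely,
   translating an independent set S by F0^-1 (F0 in S) gives traceless matrices
   [[a, b], [c, -a]] with a^2 + bc = 0 and pairwise singular differences; the
   vectors (a, b, c) are then pairwise proportional, so |S| <= p and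
   chi >= |SL(2, Z_p)| / p >= p (p - 1). *)

Section Graph.
Variables (V : finType) (e : rel V).

Lemma chromatic_numberP : irreflexive e ->
  colorable e (chromatic_number e) /\
  forall k, colorable e k -> (chromatic_number e <= k)%N.
Proof.
move=> e_irr; rewrite /chromatic_number.
case: {-}_ / boolP => [h | /forallPn [x]]; last by rewrite e_irr.
by case: ex_minnP.
Qed.

Lemma colorable_image (C : finType) (c : V -> C) :
  proper_coloring e c -> colorable e #|[set c x | x : V]|.
Proof.
move=> c_proper; apply/existsP.
exists [ffun x => enum_rank_in (imset_f c (isT : x \in V)) (c x)].
apply/forallP => x; apply/forallP => y; apply/implyP => exy; rewrite !ffunE.
apply: contra_notN (c_proper x y exy) => /eqP/(congr1 enum_val).
by rewrite !enum_rankK_in ?imset_f.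
Qed.

Lemma clique_number_le_image (C : finType) (c : V -> C) :
  proper_coloring e c -> (clique_number e <= #|[set c x | x : V]|)%N.
Proof.
move=> c_proper; apply/bigmax_leqP => S /forall_inP S_clique.
have c_inj : {in S &, injective c}.
  move=> x y Sx Sy cxy; apply/eqP; apply: contraT => nxy.
  by have := forall_inP (S_clique x Sx) y Sy; rewrite nxy => /c_proper.
rewrite -(card_in_imset c_inj); apply/subset_leq_card/subsetP.
by move=> _ /imsetP [x _ ->]; rewrite imset_f ?inE.
Qed.

Lemma card_le_chromatic_mul (a : nat) : irreflexive e ->
  (forall S : {set V}, {in S &, forall x y, ~~ e x y} -> (#|S| <= a)%N) ->
  (#|V| <= chromatic_number e * a)%N.
Proof.
move=> e_irr indep_le; have [/existsP [c /forallP c_proper] _] := chromatic_numberP e_irr.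
rewrite -sum1_card (partition_big c xpredT) //= -[X in (_ <= X * _)%N]card_ord.
rewrite -sum_nat_const; apply: leq_sum => k _; rewrite sum1dep_card.
apply: indep_le => x y; rewrite !inE => /eqP cx /eqP cy.
by have /forallP/(_ y) := c_proper x; rewrite cx cy eqxx implybF.
Qed.

End Graph.

Local Notation i1 := (lift ord0 ord0 : 'I_2).

Lemma ord2P (i : 'I_2) : i = ord0 \/ i = i1.
Proof. by case: i => [[|[|//]] ?]; [left | right]; apply: val_inj. Qed.

Section Matrix2.
Variable R : comNzRingType.

Lemma det2E (M : 'M[R]_2) :
  \det M = M ord0 ord0 * M i1 i1 - M ord0 i1 * M i1 ord0.
Proof.
rewrite (expand_det_row _ ord0) big_ord_recl big_ord1 /cofactor !det_mx11.
rewrite !mxE /= expr0 expr1 mul1r mulN1r mulrN.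
by congr (_ * M _ _ - _ * M _ _); apply: val_inj.
Qed.

Lemma mxtrace2E (M : 'M[R]_2) : \tr M = M ord0 ord0 + M i1 i1.
Proof. by rewrite /mxtrace big_ord_recl big_ord1. Qed.

Lemma det1B2E (M : 'M[R]_2) : \det (1 - M) = 1 - \tr M + \det M.
Proof. by rewrite !det2E mxtrace2E !mxE /=; ring. Qed.

End Matrix2.

Lemma det2_sub_det1 (R : comUnitRingType) (A B : 'M[R]_2) :
  \det A = 1 -> \det B = 1 -> \det (A - B) = 2%:R - \tr (invmx A *m B).
Proof.
move=> detA detB; have A_unit : A \in unitmx by rewrite unitmxE detA unitr1.
set H := invmx A *m B.
have detH : \det H = 1 by rewrite det_mulmx det_inv detA detB invr1 mulr1.
have -> : A - B = A *m (1 - H) by rewrite mulmxBr mulmx1 mulKVmx.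
by rewrite det_mulmx detA mul1r det1B2E detH addrAC.
Qed.

Lemma card_le_proportional (K : finFieldType) (T I : finType) (S : {set T})
    (v : T -> I -> K) :
  {in S &, forall x y, v x =1 v y -> x = y} ->
  {in S &, forall x y i j, v x i * v y j = v y i * v x j} ->
  (#|S| <= #|K|)%N.
Proof.
move=> v_inj v_prop.
suff [f f_inj] : exists f : T -> K, {in S &, injective f}.
  by rewrite -(card_in_imset f_inj) max_card.
case: (pickP [pred xi : T * I | (xi.1 \in S) && (v xi.1 xi.2 != 0)]).
  move=> [x0 i] /andP [/= Sx0 nz]; exists (v^~ i) => y z Sy Sz eyz.
  apply: v_inj => // j; apply: (mulfI nz).
  by rewrite v_prop // eyz -v_prop.
move=> v0; exists (fun=> 0) => y z Sy Sz _; apply: v_inj => // j.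
have := v0 (y, j); have := v0 (z, j); rewrite /= Sy Sz /=.
by move=> /negbFE/eqP -> /negbFE/eqP ->.
Qed.

Section TracelessMatrices.
Variable K : fieldType.

Lemma isotropic_pairwise_minors (a b c a' b' c' : K) :
  a ^+ 2 + b * c = 0 -> a' ^+ 2 + b' * c' = 0 ->
  (a - a') ^+ 2 + (b - b') * (c - c') = 0 ->
  [/\ a * b' = a' * b, a * c' = a' * c & b * c' = b' * c].
Proof.
move=> q0 q0' qd.
have pol0 : 2%:R * a * a' + b * c' + b' * c = 0.
  have -> : 2%:R * a * a' + b * c' + b' * c =
      (a ^+ 2 + b * c) + (a' ^+ 2 + b' * c') - ((a - a') ^+ 2 + (b - b') * (c - c')).
    by ring.
  by rewrite q0 q0' qd; ring.
have sq0 (x y : K) : (x - y) ^+ 2 = 0 -> x = y.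
  by move/eqP; rewrite sqrf_eq0 subr_eq0 => /eqP.
split; apply: sq0.
- have -> : (a * b' - a' * b) ^+ 2 = b' ^+ 2 * (a ^+ 2 + b * c)
      + b ^+ 2 * (a' ^+ 2 + b' * c') - b * b' * (2%:R * a * a' + b * c' + b' * c).
    by ring.
  by rewrite q0 q0' pol0; ring.
- have -> : (a * c' - a' * c) ^+ 2 = c' ^+ 2 * (a ^+ 2 + b * c)
      + c ^+ 2 * (a' ^+ 2 + b' * c') - c * c' * (2%:R * a * a' + b * c' + b' * c).
    by ring.
  by rewrite q0 q0' pol0; ring.
have -> : (b * c' - b' * c) ^+ 2 =
    (2%:R * a * a' + b * c' + b' * c) * (2%:R * a * a' + b * c' + b' * c - 4%:R * a * a')
    - 4%:R * (a ^+ 2 + b * c) * (a' ^+ 2 + b' * c')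
    + 4%:R * a' ^+ 2 * (a ^+ 2 + b * c) + 4%:R * a ^+ 2 * (a' ^+ 2 + b' * c').
  by ring.
by rewrite q0 q0' pol0; ring.
Qed.

Definition traceless_coord (M : 'M[K]_2) (i : 'I_3) : K :=
  [:: M ord0 ord0; M ord0 i1; M i1 ord0]`_i.

Lemma traceless_mx2_11 (M : 'M[K]_2) : \tr M = 0 -> M i1 i1 = - M ord0 ord0.
Proof. by rewrite mxtrace2E addrC => /eqP; rewrite addr_eq0 => /eqP. Qed.

Lemma det_traceless_mx2 (M : 'M[K]_2) :
  \tr M = 0 -> \det M = - (M ord0 ord0 ^+ 2 + M ord0 i1 * M i1 ord0).
Proof. by move/traceless_mx2_11; rewrite det2E => ->; ring. Qed.

Lemma traceless_coord_inj (M N : 'M[K]_2) : \tr M = 0 -> \tr N = 0 ->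
  traceless_coord M =1 traceless_coord N -> M = N.
Proof.
move=> /traceless_mx2_11 M11 /traceless_mx2_11 N11 eMN.
have e00 := eMN (@Ordinal 3 0 isT); have e01 := eMN (@Ordinal 3 1 isT).
have e10 := eMN (@Ordinal 3 2 isT).
apply/matrixP => i j; have [->|->] := ord2P i; have [->|->] := ord2P j => //.
by rewrite M11 N11; congr (- _).
Qed.

Lemma traceless_singular_proportional (M N : 'M[K]_2) :
  \tr M = 0 -> \tr N = 0 -> \det M = 0 -> \det N = 0 -> \det (M - N) = 0 ->
  forall i j, traceless_coord M i * traceless_coord N j
              = traceless_coord N i * traceless_coord M j.
Proof.
move=> trM trN; have trMN : \tr (M - N) = 0 by rewrite raddfB /= trM trN subr0.
rewrite !det_traceless_mx2 // !mxE => /eqP + /eqP + /eqP.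
rewrite !oppr_eq0 => /eqP qM /eqP qN /eqP qMN.
have [e01 e02 e12] := isotropic_pairwise_minors qM qN qMN.
case=> [[|[|[|//]]] ?] [[|[|[|//]]] ?]; rewrite /traceless_coord //=.
all: by [exact: mulrC | rewrite [RHS]mulrC ?e01 ?e02 ?e12 mulrC].
Qed.

End TracelessMatrices.

Lemma card_traceless_singular (K : finFieldType) (S : {set 'M[K]_2}) :
  0 \in S -> {in S, forall M, \tr M = 0} -> {in S &, forall M N, \det (M - N) = 0} ->
  (#|S| <= #|K|)%N.
Proof.
move=> S0 S_tr S_sing; have S_det M : M \in S -> \det M = 0.
  by move=> SM; rewrite -[M]subr0 S_sing.
apply: (card_le_proportional (v := @traceless_coord K)) => M N SM SN.
  exact: traceless_coord_inj (S_tr _ SM) (S_tr _ SN).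
exact: traceless_singular_proportional (S_tr _ SM) (S_tr _ SN)
  (S_det _ SM) (S_det _ SN) (S_sing _ _ SM SN).
Qed.

Definition mx2 (R : nzRingType) (a b c d : R) : 'M[R]_2 :=
  \matrix_(i, j) if i == ord0 then if j == ord0 then a else b
                 else if j == ord0 then c else d.

Lemma det_mx2 (R : comNzRingType) (a b c d : R) : \det (mx2 a b c d) = a * d - b * c.
Proof. by rewrite det2E !mxE. Qed.

Lemma det_mx2_completion (K : fieldType) (a b c : K) :
  a != 0 -> \det (mx2 a b c ((1 + b * c) / a)) = 1.
Proof. by move=> a_nz; rewrite det_mx2 mulrCA divff // mulr1 addrK. Qed.

Section SL2.
Variable p : nat.
Hypothesis p_pr : prime p.

Lemma SL2_det (F : SL2 p) : \det (val F) = 1.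
Proof. exact/eqP/(valP F). Qed.

Lemma SL2_unit (F : SL2 p) : val F \in unitmx.
Proof. by rewrite unitmxE SL2_det unitr1. Qed.

Lemma SL2_of_det1 (M : 'M['F_p]_2) : \det M = 1 -> exists F : SL2 p, val F = M.
Proof. by move/eqP=> detM; exists (Sub M detM). Qed.

Lemma cayley_adjE (F G : SL2 p) : cayley_adj F G = (\det (val F - val G) != 0).
Proof. by rewrite det2_sub_det1 ?SL2_det // subr_eq0 eq_sym. Qed.

Lemma cayley_adj_irr : irreflexive (@cayley_adj p).
Proof. by move=> F; rewrite cayley_adjE subrr det0 eqxx. Qed.

Lemma top_row_proper : proper_coloring (@cayley_adj p) (@top_row p).
Proof.
move=> F G + [e00 e01]; rewrite cayley_adjE det2E !mxE e00 e01.
by rewrite !subrr !mul0r subrr eqxx.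
Qed.

Lemma top_row_image : [set top_row F | F : SL2 p] = [set~ (0, 0)].
Proof.
apply/setP => [[a b]]; rewrite !inE; apply/imsetP/idP => [[F _ [-> ->]] | nz].
  apply: contra_eqN (SL2_det F) => /eqP [F00 F01].
  by rewrite det2E F00 F01 !mul0r subrr eq_sym oner_eq0.
have [a0 | a_nz] := eqVneq a 0.
  have b_nz : b != 0 by apply: contraNneq nz => ->; rewrite a0.
  have [F F_val] : exists F : SL2 p, val F = mx2 0 b (- b^-1) 0.
    by apply: SL2_of_det1; rewrite det_mx2 mul0r sub0r mulrN opprK mulfV.
  by exists F; rewrite // /top_row F_val !mxE a0.
have [F F_val] := SL2_of_det1 (det_mx2_completion b 0 a_nz).
by exists F; rewrite // /top_row F_val !mxE.
Qed.

Lemma card_top_row_image : #|[set top_row F | F : SL2 p]| = (p ^ 2 - 1)%N.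
Proof. by rewrite top_row_image cardsC1 card_prod card_Fp // mulnn subn1. Qed.

Lemma card_SL2_ge : (p * (p - 1) * p <= #|{: SL2 p}|)%N.
Proof.
pose f (x : 'F_p * 'F_p * 'F_p) := mx2 x.1.1 x.1.2 x.2 ((1 + x.1.2 * x.2) / x.1.1).
pose src : {set 'F_p * 'F_p * 'F_p} := setX (setX [set~ 0] setT) setT.
have f_inj : {in src &, injective f}.
  move=> [[a b] c] [[a' b'] c'] _ _ /matrixP e.
  by have := e ord0 ord0; have := e ord0 i1; have := e i1 ord0; rewrite !mxE /= => -> -> ->.
have card_src : #|src| = (p * (p - 1) * p)%N.
  by rewrite !cardsX cardsC1 !cardsT card_Fp // -subn1 (mulnC p).
rewrite card_sig -card_src -(card_in_imset f_inj); apply/subset_leq_card/subsetP.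
by move=> M /imsetP [[[a b] c] + ->]; rewrite !inE !andbT => /det_mx2_completion ->.
Qed.

Lemma SL2_independent_card (S : {set SL2 p}) :
  {in S &, forall F G, ~~ cayley_adj F G} -> (#|S| <= p)%N.
Proof.
move=> S_indep; have [-> | [F0 SF0]] := set_0Vmem S; first by rewrite cards0.
have S_sing F G : F \in S -> G \in S -> \det (val F - val G) = 0.
  by move=> SF SG; apply/eqP/negbNE; rewrite -cayley_adjE S_indep.
pose n (G : SL2 p) := invmx (val F0) *m (val G - val F0).
have n_inj : injective n.
  by move=> G H /(can_inj (mulKVmx (SL2_unit F0)))/addIr/val_inj.
have n_tr G : G \in S -> \tr (n G) = 0.
  move=> SG; have := S_sing F0 G SF0 SG.
  rewrite /n mulmxBr mulVmx ?SL2_unit // raddfB /= mxtrace1 det2_sub_det1 ?SL2_det //.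
  by rewrite -opprB => /eqP; rewrite oppr_eq0 => /eqP.
rewrite -(card_imset _ n_inj) -[p in (_ <= p)%N](card_Fp p_pr).
apply: card_traceless_singular.
- by apply/imsetP; exists F0; rewrite // /n subrr mulmx0.
- by move=> _ /imsetP [G SG ->]; exact: n_tr.
move=> _ _ /imsetP [G SG ->] /imsetP [H SH ->].
by rewrite /n -mulmxBr det_mulmx opprB addrA subrK S_sing ?mulr0.
Qed.

End SL2.

Local Close Scope ring_scope.

Theorem mainTheorem4 (p : nat) (hp : prime p) :
  proper_coloring (@cayley_adj p) (@top_row p) /\
  #|[set top_row F | F : SL2 p]| = (p ^ 2 - 1)%N /\
  (p * (p - 1) <= chromatic_number (@cayley_adj p) <= p ^ 2 - 1)%N /\
  (clique_number (@cayley_adj p) <= p ^ 2 - 1)%N.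
Proof.
have proper := @top_row_proper p.
have card_im := card_top_row_image hp.
have irr := @cayley_adj_irr p.
do 2!split=> //; split; last by rewrite -card_im clique_number_le_image.
apply/andP; split; last by rewrite -card_im (chromatic_numberP irr).2 ?colorable_image.
rewrite -(leq_pmul2r (prime_gt0 hp)); apply: leq_trans (card_SL2_ge hp) _.
exact: card_le_chromatic_mul irr (SL2_independent_card hp).
Qed.
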